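(* Let $1<p<\infty$ and $\alpha\in\mathbb R$. There is $C>0$ such that for all $N\ge1$, all $A\subset\mathbb Z$ with $|A|\le N$, and all scalars $|\varepsilon_n|\le1$, $$\Big\|\sum_{n\in A}\varepsilon_ne^{inx}\Big\|_{L^p(\log L)^\alpha(\mathbb T)}\le C\max\Big\{N^{1/2},\ N^{1-\frac1p}(\log(e+N))^\alpha\Big\}.$$
   Context: $\mathbb T\equiv[-\pi,\pi)$. $L^p(\log L)^\alpha(\mathbb T)$ is the Orlicz space $L^\Phi$ with $\Phi(t)=\int_0^ts^{p-1}(\log(c+s))^{\alpha p}ds$ ($c>1$ fixed large enough that $\Phi$ is a Young function), with Luxemburg norm $\inf\{\lambda>0:\int_{\mathbb T}\Phi(|f|/\lambda)\le1\}$. *)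

From HB Require Import structures.
From mathcomp Require Import all_boot all_order all_algebra.
From mathcomp Require Import all_classical all_reals all_analysis.
Set Implicit Arguments. Unset Strict Implicit. Unset Printing Implicit Defensive.
Import Order.TTheory GRing.Theory Num.Theory.
Import numFieldNormedType.Exports.
Local Open Scope classical_set_scope.
Local Open Scope ring_scope.

Definition torus (R : realType) : set R := `[(- pi)%R, pi[%classic.

Definition orliczPhi (R : realType) (p alpha c : R) (t : R) : R :=
  fine (\int[lebesgue_measure]_(s in `[0%R, t])
      (powR s (p - 1) * powR (ln (c + s)) (alpha * p))%:E)%E.

Definition young_function (R : realType) (Phi : R -> R) : Prop :=
  [/\ Phi 0 = 0,
      (forall t, 0 <= t -> 0 <= Phi t),
      (forall s t l, 0 <= s -> 0 <= t -> 0 <= l <= 1 ->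
          Phi (l * s + (1 - l) * t) <= l * Phi s + (1 - l) * Phi t)
    & Phi x @[x --> +oo] --> +oo].

Definition luxemburg_norm (R : realType) (Phi : R -> R) (g : R -> R) : \bar R :=
  ereal_inf [set l%:E | l in [set l : R | 0 < l /\
     (\int[lebesgue_measure]_(x in @torus R) (Phi (`|g x| / l))%:E <= 1)%E]].

(* Modulus of the trigonometric polynomial sum_{n in A} eps_n e^{inx},
   with eps_n = a n + i b n, written out via real and imaginary parts. *)
Definition trig_poly_abs (R : realType) (A : seq int) (a b : int -> R) (x : R) : R :=
  Num.sqrt ((\sum_(n <- A) (a n * cos (n%:~R * x) - b n * sin (n%:~R * x))) ^+ 2
          + (\sum_(n <- A) (a n * sin (n%:~R * x) + b n * cos (n%:~R * x))) ^+ 2).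

From HB Require Import structures.
From mathcomp Require Import all_boot all_order all_algebra.
From mathcomp Require Import all_classical all_reals all_analysis.
Import Order.TTheory GRing.Theory Num.Theory.
Import numFieldNormedType.Exports.
Local Open Scope classical_set_scope.
Local Open Scope ring_scope.

From mathcomp Require Import ring lra.

Set Implicit Arguments. Unset Strict Implicit. Unset Printing Implicit Defensive.

(* Write [g = |sum_(n in A) eps_n e^(inx)|] and [lambda = e^X M], [M] the right-hand side
   without its constant.  Parseval gives [int_T g^2 <= 2 pi N], and [g <= N] pointwise.
   Since [Phi(s) <= K s^p (ln (c + s))^(alpha p)] and [ln ln] grows slower than any
   multiple of [ln], [Phi(s) / s^2] is quasi-decreasing when [p < 2] (or [p = 2],
   [alpha <= 0]) and quasi-increasing otherwise.  Comparing with its value at a small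
   [delta], resp. at [N / lambda] (or at [N^(1/p) ln(e+N)^(-alpha)] when [alpha < 0]),
   the bound [N^(1/2) <= M], resp. [N^(1-1/p) ln(e+N)^alpha <= M], yields
   [Phi(g / lambda) <= Phi(delta) + g^2 / (4 pi N)], whose integral is at most
   [1/2 + 1/2] once [2 pi Phi(delta) <= 1/2]. *)

Section TrigonometricIntegrals.
Variable R : realType.
Local Notation mu := (@lebesgue_measure R).

Lemma integral_itv_is_derive (f F : R -> R) (a b : R) : a < b ->
  continuous f -> (forall x, is_derive x (1:R) F (f x)) ->
  (\int[mu]_(x in `[a, b]) (f x)%:E = (F b)%:E - (F a)%:E)%E.
Proof.
move=> ab cf dF.
have cF : continuous F.
  move=> x; apply: differentiable_continuous.
  by apply/derivable1_diffP; exact: ex_derive.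
apply: continuous_FTC2 => //.
- exact: continuous_subspaceT.
- split.
  + by move=> x _; exact: ex_derive.
  + exact: (cvg_at_right_filter (cF a)).
  + exact: (cvg_at_left_filter (cF b)).
- by move=> x _; rewrite derive1E; apply: derive_val.
Qed.

Lemma continuous_itv_integrable (f : R -> R) (a b : R) : continuous f ->
  mu.-integrable `[a, b] (fun x => (f x)%:E).
Proof.
move=> cf; apply: continuous_compact_integrable; first exact: segment_compact.
exact: continuous_subspaceT.
Qed.

Lemma is_derive_sin_scale (k x : R) :
  is_derive x (1:R) (fun y => sin (k * y)) (cos (k * x) * k).
Proof.
apply: (@is_derive1_comp R sin (fun y => k * y)).
by apply: trigger_derive; exact: mulr1.
Qed.

Lemma is_derive_cos_scale (k x : R) :
  is_derive x (1:R) (fun y => cos (k * y)) (- sin (k * x) * k).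
Proof.
apply: (@is_derive1_comp R cos (fun y => k * y)).
by apply: trigger_derive; exact: mulr1.
Qed.

Lemma continuous_sin_scale (k : R) : continuous (fun y => sin (k * y)).
Proof. by move=> x; apply: continuous_comp; [exact: mulrl_continuous | exact: continuous_sin]. Qed.

Lemma continuous_cos_scale (k : R) : continuous (fun y => cos (k * y)).
Proof. by move=> x; apply: continuous_comp; [exact: mulrl_continuous | exact: continuous_cos]. Qed.

Lemma sin_natr_pi (n : nat) : sin (n%:R * pi) = 0 :> R.
Proof.
elim: n => [|n IH]; first by rewrite mul0r sin0.
by rewrite -addn1 natrD mulrDl mul1r sinDpi IH oppr0.
Qed.

Lemma sin_intr_pi (z : int) : sin (z%:~R * pi) = 0 :> R.
Proof.
case: z => n; first by rewrite -pmulrn sin_natr_pi.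
by rewrite NegzE mulrNz mulNr sinN -pmulrn sin_natr_pi oppr0.
Qed.

Lemma pi_gtN : - pi < pi :> R.
Proof. by rewrite gtrN // pi_gt0. Qed.

Lemma integral_cos_intr_scale (z : int) : z != 0 ->
  (\int[mu]_(x in `[(- pi)%R, pi]) (cos (z%:~R * x))%:E = 0)%E.
Proof.
move=> z0; have k0 : (z%:~R : R) != 0 by rewrite intr_eq0.
have dF x : is_derive x (1:R) (fun y => sin (z%:~R * y) / z%:~R) (cos (z%:~R * x)).
  have h := is_derive_sin_scale z%:~R x; apply: trigger_derive.
  by rewrite !scaler0 add0r /GRing.scale /= mulrCA mulVf // mulr1.
rewrite (integral_itv_is_derive pi_gtN (@continuous_cos_scale _) dF).
by rewrite mulrN sinN sin_intr_pi oppr0 mul0r subee.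
Qed.

Lemma integral_sin_scale (k : R) :
  (\int[mu]_(x in `[(- pi)%R, pi]) (sin (k * x))%:E = 0)%E.
Proof.
have [->|k0] := eqVneq k 0.
  by under eq_integral do rewrite mul0r sin0; rewrite integral0.
have dF x : is_derive x (1:R) (fun y => - cos (k * y) / k) (sin (k * x)).
  have h := is_derive_cos_scale k x; apply: trigger_derive.
  by rewrite scaler0 add0r /GRing.scale/= mulNr opprK mulrCA mulVf // mulr1.
rewrite (integral_itv_is_derive pi_gtN (@continuous_sin_scale _) dF).
by rewrite mulrN cosN subee.
Qed.

Lemma integral_itv_pi_cst (r : R) :
  (\int[mu]_(x in `[(- pi)%R, pi]) r%:E = (r * pi *+ 2)%:E)%E.
Proof.
rewrite integral_cst //= lebesgue_measure_itv /= ifT; last by rewrite lte_fin pi_gtN.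
by rewrite -EFinD -EFinM opprK -mulr2n mulrnAr.
Qed.

Lemma integral_harmonic_diff (n m : int) (u v : R) :
  (\int[mu]_(x in `[(- pi)%R, pi])
     ((u * cos ((n%:~R - m%:~R) * x) + v * sin ((n%:~R - m%:~R) * x))%:E)
   = (if n == m then u * pi *+ 2 else 0)%:E)%E.
Proof.
rewrite -intrB.
under eq_integral do rewrite EFinD !EFinM.
have icos := continuous_itv_integrable (- pi) pi (@continuous_cos_scale (n - m)%:~R).
have isin := continuous_itv_integrable (- pi) pi (@continuous_sin_scale (n - m)%:~R).
rewrite integralD //; try exact: integrableZl.
rewrite !integralZl // integral_sin_scale mule0 adde0.
have [->|nm] := eqVneq n m; last by rewrite integral_cos_intr_scale ?mule0 // subr_eq0.
under eq_integral do rewrite subrr mul0r cos0.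
by rewrite integral_itv_pi_cst mul1r -EFinM mulrnAr.
Qed.

End TrigonometricIntegrals.

Section TrigonometricPolynomials.
Variables (R : realType) (A : seq int) (a b : int -> R).
Local Notation mu := (@lebesgue_measure R).

Definition trig_re (x : R) : R :=
  \sum_(n <- A) (a n * cos (n%:~R * x) - b n * sin (n%:~R * x)).
Definition trig_im (x : R) : R :=
  \sum_(n <- A) (a n * sin (n%:~R * x) + b n * cos (n%:~R * x)).

Lemma trig_poly_abs_sqr x : trig_poly_abs A a b x ^+ 2 = trig_re x ^+ 2 + trig_im x ^+ 2.
Proof. by rewrite sqr_sqrtr // addr_ge0 // sqr_ge0. Qed.

(* The (n, m) term of |sum_n eps_n e^{inx}|^2 = sum_{n,m} eps_n conj(eps_m) e^{i(n-m)x}. *)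
Definition trig_cross (n m : int) (x : R) : R :=
  (a n * a m + b n * b m) * cos ((n%:~R - m%:~R) * x) +
  (a n * b m - b n * a m) * sin ((n%:~R - m%:~R) * x).

Lemma trig_sqr_expand x :
  trig_re x ^+ 2 + trig_im x ^+ 2 = \sum_(n <- A) \sum_(m <- A) trig_cross n m x.
Proof.
rewrite /trig_re /trig_im !expr2 !big_distrl /= -big_split /=; apply: eq_bigr => n _.
rewrite !big_distrr /= -big_split /=; apply: eq_bigr => m _.
rewrite /trig_cross !mulrBl cosB sinB; ring.
Qed.

Lemma continuous_trig_cross n m : continuous (trig_cross n m).
Proof.
move=> x; apply: cvgD; apply: cvgM; try exact: cvg_cst.
  exact: continuous_cos_scale.
exact: continuous_sin_scale.
Qed.

Lemma parseval_trig : uniq A ->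
  (\int[mu]_(x in `[(- pi)%R, pi]) ((trig_re x ^+ 2 + trig_im x ^+ 2)%:E)
   = (pi *+ 2 * \sum_(n <- A) (a n ^+ 2 + b n ^+ 2))%:E)%E.
Proof.
move=> uA.
have icross n m := continuous_itv_integrable (- pi) pi (@continuous_trig_cross n m).
under eq_integral => x _.
  rewrite trig_sqr_expand -sumEFin.
  under eq_bigr => n _ do rewrite -sumEFin.
  over.
rewrite integral_sum //; last by move=> n; apply: integrable_sum.
under eq_bigr => n _.
  rewrite integral_sum //.
  under eq_bigr => m _ do rewrite integral_harmonic_diff.
  rewrite sumEFin; over.
rewrite sumEFin big_distrr; congr (_%:E); apply: eq_big_seq => n nA.
rewrite (bigD1_seq n) //= eqxx big1 ?addr0; last by move=> m mn; rewrite eq_sym (negbTE mn).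
by rewrite -!expr2; ring.
Qed.

Lemma continuous_trig_re : continuous trig_re.
Proof.
apply: continuous_big => [|n _ x]; first exact: add_continuous.
apply: cvgB; apply: cvgM; try exact: cvg_cst.
  exact: continuous_cos_scale.
exact: continuous_sin_scale.
Qed.

Lemma continuous_trig_im : continuous trig_im.
Proof.
apply: continuous_big => [|n _ x]; first exact: add_continuous.
apply: cvgD; apply: cvgM; try exact: cvg_cst.
  exact: continuous_sin_scale.
exact: continuous_cos_scale.
Qed.

Lemma continuous_trig_sqr : continuous (fun x => trig_re x ^+ 2 + trig_im x ^+ 2).
Proof.
move=> x; apply: cvgD; apply: cvgM.
- exact: continuous_trig_re.
- exact: continuous_trig_re.
- exact: continuous_trig_im.
- exact: continuous_trig_im.
Qed.

Lemma continuous_trig_poly_abs : continuous (trig_poly_abs A a b).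
Proof.
move=> x; have := continuous_comp (@continuous_trig_sqr x) (@sqrt_continuous R _).
exact.
Qed.

Lemma sqr_norm2D_le (x y u v k : R) : 0 <= k ->
  x ^+ 2 + y ^+ 2 <= k ^+ 2 -> u ^+ 2 + v ^+ 2 <= 1 ->
  (x + u) ^+ 2 + (y + v) ^+ 2 <= (k + 1) ^+ 2.
Proof.
move=> k0 xyk uv1.
have cauchy_schwarz : (x * u + y * v) ^+ 2 <= k ^+ 2.
  have e : (x * u + y * v) ^+ 2 + (x * v - y * u) ^+ 2
         = (x ^+ 2 + y ^+ 2) * (u ^+ 2 + v ^+ 2) by ring.
  have := sqr_ge0 (x * v - y * u); nra.
have : x * u + y * v <= k.
  rewrite -(ger0_norm k0); apply: le_trans (ler_norm _) _.
  by rewrite -ler_sqr ?nnegrE ?normr_ge0 // !real_normK ?num_real.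
nra.
Qed.

Lemma sqr_norm2_sum_le (I : eqType) (s : seq I) (u v : I -> R) :
  (forall i, i \in s -> u i ^+ 2 + v i ^+ 2 <= 1) ->
  (\sum_(i <- s) u i) ^+ 2 + (\sum_(i <- s) v i) ^+ 2 <= (size s)%:R ^+ 2.
Proof.
elim: s => [|i s IH] uv1; first by rewrite !big_nil expr0n /= addr0.
rewrite !big_cons /= mulrSr [u i + _]addrC [v i + _]addrC.
apply: sqr_norm2D_le; first by [].
  by apply: IH => j js; apply: uv1; rewrite in_cons js orbT.
exact: uv1 (mem_head _ _).
Qed.

Hypothesis ab_le1 : forall n, n \in A -> a n ^+ 2 + b n ^+ 2 <= 1.

Lemma trig_poly_abs_le_size x : trig_poly_abs A a b x <= (size A)%:R.
Proof.
rewrite -(ler_pXn2r (n := 2)) ?nnegrE ?sqrtr_ge0 ?ler0n // trig_poly_abs_sqr.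
apply: sqr_norm2_sum_le => n nA.
have -> : (a n * cos (n%:~R * x) - b n * sin (n%:~R * x)) ^+ 2 +
          (a n * sin (n%:~R * x) + b n * cos (n%:~R * x)) ^+ 2 =
          (a n ^+ 2 + b n ^+ 2) * (cos (n%:~R * x) ^+ 2 + sin (n%:~R * x) ^+ 2) by ring.
by rewrite cos2Dsin2 mulr1; exact: ab_le1.
Qed.

Lemma sum_ab_sqr_le_size : \sum_(n <- A) (a n ^+ 2 + b n ^+ 2) <= (size A)%:R.
Proof.
rewrite -sum1_size natr_sum big_seq [X in _ <= X]big_seq.
by apply: ler_sum => n nA; exact: ab_le1.
Qed.

End TrigonometricPolynomials.

Section LogLogGrowth.
Variables (R : realType) (c : R).
Local Notation lnln s := (ln (ln (c + s))).

Lemma ln_le (x y : R) : 0 < x -> x <= y -> ln x <= ln y.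
Proof. by move=> x0 xy; rewrite ler_ln ?posrE // (lt_le_trans x0). Qed.

Lemma lnD_gt0 (s : R) : 1 < c -> 0 <= s -> 0 < ln (c + s).
Proof. by move=> c1 s0; apply: ln_gt0; lra. Qed.

Lemma lnln_le (s t : R) : 1 < c -> 0 <= s -> s <= t -> lnln s <= lnln t.
Proof. by move=> c1 s0 st; apply: ln_le; [exact: lnD_gt0 | apply: ln_le; lra]. Qed.

Lemma lnln_sub_le (s t : R) : 1 < c -> 0 < t -> t <= s ->
  lnln s - lnln t <= ln (1 + (ln c)^-1) + ln (1 + (ln s - ln t)).
Proof.
move=> c1 t0 ts; have s0 : 0 < s by exact: lt_le_trans ts.
set w := ln s - ln t.
have w0 : 0 <= w by rewrite subr_ge0 ln_le.
have lc0 : 0 < ln c by rewrite ln_gt0.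
have ltc : ln c <= ln (c + t) by rewrite ln_le; lra.
have ln_cs : ln (c + s) <= ln (c + t) + w.
  rewrite /w -ln_div ?posrE // -lnM ?posrE ?divr_gt0 //; last lra.
  apply: ln_le; first lra.
  have st1 : 1 <= s / t by rewrite ler_pdivlMr // mul1r.
  have -> : (c + t) * (s / t) = c * (s / t) + s by field; rewrite gt_eqF.
  nra.
have lnct0 := lnD_gt0 c1 (ltW t0); have lncs0 := lnD_gt0 c1 (ltW s0).
have lnln_cs : lnln s - lnln t <= ln (1 + w / ln c).
  rewrite -ln_div ?posrE //; apply: ln_le; first exact: divr_gt0.
  rewrite ler_pdivrMr // mulrDl mul1r.
  apply: (le_trans ln_cs); rewrite lerD2l -mulrA ler_peMr //.
  by rewrite ler_pdivlMl // mulr1.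
apply: (le_trans lnln_cs).
have wc0 : 0 <= w / ln c by rewrite divr_ge0 // ltW.
have i0 : 0 <= (ln c)^-1 by rewrite invr_ge0 ltW.
rewrite -lnM ?posrE; [|lra|lra]; apply: ln_le; first lra.
have -> : (1 + (ln c)^-1) * (1 + w) = 1 + w + (ln c)^-1 + w / ln c by ring.
nra.
Qed.

Lemma lnln_slow_growth (a g : R) : 1 < c -> 0 < g -> exists K : R,
  forall t s, 0 < t -> t <= s -> a * (lnln t - lnln s) <= K + g * (ln s - ln t).
Proof.
move=> c1 g0; have a1 : 0 < `|a| + 1 by rewrite ltr_wpDl.
pose eta := g / (`|a| + 1); have eta0 : 0 < eta by rewrite divr_gt0.
exists (`|a| * (ln (1 + (ln c)^-1) + eta + `|ln eta|)) => t s t0 ts.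
have s0 : 0 < s by exact: lt_le_trans ts.
set w := ln s - ln t.
have w0 : 0 <= w by rewrite subr_ge0 ln_le.
(* [ln y <= y - 1] at [y = eta (1 + w)] *)
have ln1w : ln (1 + w) <= eta * (1 + w) - 1 - ln eta.
  have := le_ln1Dx (x := eta * (1 + w) - 1) ltac:(nra).
  rewrite addrC subrK lnM ?posrE //; lra.
have aeta : `|a| * eta <= g.
  have -> : `|a| * eta = g * (`|a| / (`|a| + 1)) by rewrite /eta; field; rewrite gt_eqF.
  by rewrite ler_piMr ?divr_ge0 ?ltW // ltr_pdivrMr // mul1r ltrDl.
have lnln_ts : lnln t <= lnln s by apply: lnln_le; lra.
have : a * (lnln t - lnln s) <= `|a| * (lnln s - lnln t).
  have : - a <= `|a| by rewrite -normrN ler_norm.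
  have : 0 <= lnln s - lnln t by rewrite subr_ge0.
  nra.
move/le_trans; apply.
have := lnln_sub_le c1 t0 ts; have := ler_norm (- ln eta); rewrite normrN -/w => hn hl.
have := normr_ge0 a; nra.
Qed.

End LogLogGrowth.

Lemma young_function_le_ratio (R : realType) (Phi : R -> R) (s t : R) :
  young_function Phi -> 0 <= s -> s <= t -> 0 < t -> Phi s <= s / t * Phi t.
Proof.
case=> Phi0 _ Phi_convex _ s0 st t0.
have l0 : 0 <= s / t by rewrite divr_ge0 // ltW.
have l1 : s / t <= 1 by rewrite ler_pdivrMr // mul1r.
have := Phi_convex t 0 (s / t) (ltW t0) (lexx 0); rewrite l0 l1 => /(_ isT).
by rewrite mulr0 addr0 Phi0 mulr0 addr0 divfK ?gt_eqF.
Qed.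

Section OrliczFunction.
Variables (R : realType) (p alpha c : R).
Local Notation Phi := (orliczPhi p alpha c).
Local Notation mu := (@lebesgue_measure R).

Definition orlicz_density (s : R) : R := powR s (p - 1) * powR (ln (c + s)) (alpha * p).

Lemma orlicz_density_ge0 s : 0 <= orlicz_density s.
Proof. by rewrite mulr_ge0 // powR_ge0. Qed.

Lemma measurable_orlicz_density : measurable_fun setT orlicz_density.
Proof.
apply: measurable_realfun.measurable_funM; first exact: measurable_realfun.measurable_powR.
apply: (measurableT_comp (measurable_realfun.measurable_powR _)).
apply: (measurableT_comp (@measurable_realfun.measurable_ln R)).
exact: measurable_realfun.measurable_funD.
Qed.

Lemma orliczPhi_lt0 t : t < 0 -> Phi t = 0.
Proof.
move=> t0; rewrite /orliczPhi set_itv_ge ?integral_set0 //.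
by rewrite bnd_simp -ltNge.
Qed.

Lemma orliczPhi_le_mul_sup s B : 0 <= s -> 0 <= B ->
  (forall x, 0 <= x <= s -> orlicz_density x <= B) -> Phi s <= s * B.
Proof.
move=> s0 B0 hB.
have int_le : (\int[mu]_(x in `[0%R, s]) (orlicz_density x)%:E <= (s * B)%:E)%E.
  apply: (@le_trans _ _ (\int[mu]_(x in `[0%R, s]) (cst B%:E) x)%E).
    apply: ge0_le_integral => //.
      by move=> x _; rewrite lee_fin orlicz_density_ge0.
    apply/measurable_realfun.measurable_EFinP.
    exact: measurable_funTS measurable_orlicz_density.
  rewrite integral_cst //= lebesgue_measure_itv /=.
  case: ifPn => _; first by rewrite oppr0 adde0 -EFinM mulrC.
  by rewrite mule0 lee_fin mulr_ge0.
have int_ge0 : (0 <= \int[mu]_(x in `[0%R, s]) (orlicz_density x)%:E)%E.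
  by apply: integral_ge0 => x _; rewrite lee_fin orlicz_density_ge0.
apply: (@fine_le _ _ ((s * B)%:E)) => //.
by rewrite ge0_fin_numE // (le_lt_trans int_le) // ltry.
Qed.

Lemma orlicz_densityE s : 1 < c -> 0 < s ->
  orlicz_density s = expR ((p - 1) * ln s + alpha * p * ln (ln (c + s))).
Proof.
move=> c1 s0; rewrite /orlicz_density /powR gt_eqF // gt_eqF ?lnD_gt0 ?ltW //.
by rewrite expRD.
Qed.

Lemma orliczPhi_growth : 1 < p -> 1 < c -> exists K : R, forall s, 0 < s ->
  Phi s <= expR (K + p * ln s + alpha * p * ln (ln (c + s))).
Proof.
move=> p1 c1; have p10 : 0 < p - 1 by rewrite subr_gt0.
have [K HK] := lnln_slow_growth (alpha * p) c1 p10.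
exists K => s s0.
set B := expR (K + (p - 1) * ln s + alpha * p * ln (ln (c + s))).
have -> : expR (K + p * ln s + alpha * p * ln (ln (c + s))) = s * B.
  rewrite -[in RHS](lnK (x := s)) ?posrE // /B -expRD; congr expR; ring.
apply: orliczPhi_le_mul_sup; [exact: ltW | exact: ltW (expR_gt0 _) |].
move=> x /andP[x0 xs].
have [->|xn0] := eqVneq x 0.
  rewrite /orlicz_density powR0 ?mul0r ?subr_eq0 ?gt_eqF //; exact: ltW (expR_gt0 _).
have x0' : 0 < x by rewrite lt_neqAle eq_sym xn0 x0.
rewrite orlicz_densityE // /B ler_expR.
have := HK x s x0' xs; rewrite !mulrBr; lra.
Qed.

Hypothesis Y : young_function Phi.

Lemma orliczPhi_ge0 t : 0 <= Phi t.
Proof.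
have [t0|t0] := ltP t 0; first by rewrite orliczPhi_lt0.
by case: Y => _ + _ _; apply.
Qed.

Lemma orliczPhi_nondecreasing : {homo Phi : x y / x <= y}.
Proof.
move=> x y xy.
have [x0|x0] := ltP x 0; first by rewrite orliczPhi_lt0 // orliczPhi_ge0.
have [->|yx] := eqVneq y x; first by [].
have y0 : 0 < y by rewrite (le_lt_trans x0) // lt_neqAle eq_sym yx.
apply: (le_trans (young_function_le_ratio Y x0 xy y0)).
have : x / y <= 1 by rewrite ler_pdivrMr // mul1r.
have := orliczPhi_ge0 y; nra.
Qed.

End OrliczFunction.

Section ScaleBound.
Variables (R : realType) (p alpha c : R).
Local Notation lnln s := (ln (ln (c + s))).

(* The logarithm of [s^(p-2) (ln (c + s))^(alpha p)], which dominates [Phi(s) / s^2]. *)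
Definition orlicz_log_ratio (s : R) : R := (p - 2) * ln s + alpha * p * lnln s.

Lemma orlicz_log_ratio_quasi_decreasing : 0 < p -> 1 < c ->
  p < 2 \/ (p <= 2 /\ alpha <= 0) -> exists K : R,
  forall t s, 0 < t -> t <= s -> orlicz_log_ratio s - orlicz_log_ratio t <= K.
Proof.
rewrite /orlicz_log_ratio => p0 c1 [p2|[p2 a0]].
  have g0 : 0 < 2 - p by lra.
  have [K HK] := lnln_slow_growth (- (alpha * p)) c1 g0.
  by exists K => t s t0 ts; have := HK t s t0 ts; lra.
exists 0 => t s t0 ts.
have := ln_le t0 ts; have := lnln_le c1 (ltW t0) ts.
have : alpha * p <= 0 by nra.
nra.
Qed.

Lemma orlicz_log_ratio_quasi_increasing : 0 < p -> 1 < c ->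
  2 < p \/ (2 <= p /\ 0 <= alpha) -> exists K : R,
  forall s t, 0 < s -> s <= t -> orlicz_log_ratio s - orlicz_log_ratio t <= K.
Proof.
rewrite /orlicz_log_ratio => p0 c1 hp.
have [a0|a0] := leP 0 alpha.
  have p2 : 2 <= p by case: hp => [|[]//]; lra.
  exists 0 => s t s0 st.
  have := ln_le s0 st; have := lnln_le c1 (ltW s0) st.
  have : 0 <= alpha * p by nra.
  nra.
have g0 : 0 < p - 2 by case: hp => [|[]]; lra.
have [K HK] := lnln_slow_growth (alpha * p) c1 g0.
by exists K => s t s0 st; have := HK s t s0 st; lra.
Qed.

Lemma ln_expR1D_ge1 (N : R) : 0 <= N -> 1 <= ln (expR 1 + N).
Proof. by move=> N0; rewrite -[leLHS]expRK ler_ln ?posrE ?expR_gt0 ?ltr_wpDr ?lerDl. Qed.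

Lemma ln_div_expR_mul (X N M : R) : 0 < N -> 0 < M ->
  ln (N / (expR X * M)) = ln N - (X + ln M).
Proof. by move=> N0 M0; rewrite ln_div ?lnM ?posrE ?expRK ?mulr_gt0 ?expR_gt0. Qed.

Lemma lnln_le_lnln_expR1D (T N : R) : 1 < c -> 0 <= T -> T <= N ->
  lnln T <= ln (1 + ln c) + ln (ln (expR 1 + N)).
Proof.
move=> c1 T0 TN; have lc0 : 0 < ln c by exact: ln_gt0.
have e1 : 1 <= expR 1 :> R by rewrite -expR0 ler_expR.
have L1 := ln_expR1D_ge1 (le_trans T0 TN).
rewrite -lnM ?posrE; [|lra|lra]; apply: ln_le; first exact: lnD_gt0.
have : ln (c + T) <= ln c + ln (expR 1 + N).
  rewrite -lnM ?posrE; [|lra|lra]; apply: ln_le; nra.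
nra.
Qed.

Lemma lnln_expR1D_le_lnln (T N q : R) : 1 < c -> 1 <= N -> 0 < q -> 0 < T ->
  ln N <= q * ln T ->
  ln (ln (expR 1 + N)) - ln (q + ln (expR 1 + 1) / ln c) <= lnln T.
Proof.
move=> c1 N1 q0 T0 lnNT; have lc0 : 0 < ln c by exact: ln_gt0.
have e0 : 0 < expR 1 :> R by exact: expR_gt0.
have le0 : 0 <= ln (expR 1 + 1) :> R by apply: ln_ge0; lra.
have m0 : 0 < q + ln (expR 1 + 1) / ln c.
  have : 0 <= ln (expR 1 + 1) / ln c by rewrite divr_ge0 // ltW.
  lra.
have lcT : 0 < ln (c + T) by exact: lnD_gt0 (ltW T0).
have L0 : 0 < ln (expR 1 + N) by apply: ln_gt0; lra.
have lnL : ln (expR 1 + N) <= ln N + ln (expR 1 + 1).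
  rewrite -lnM ?posrE; [|lra|lra]; apply: ln_le; nra.
have lnNcT : ln N <= q * ln (c + T).
  by apply: (le_trans lnNT); rewrite ler_pM2l // ln_le //; lra.
have le1cT : ln (expR 1 + 1) <= ln (expR 1 + 1) / ln c * ln (c + T).
  by rewrite -mulrA ler_peMr // ler_pdivlMl // mulr1 ln_le //; lra.
rewrite -ln_div ?posrE //; apply: ln_le; first exact: divr_gt0.
rewrite ler_pdivrMr // mulrDr; lra.
Qed.

(* [M] stands for [max (N^(1/2), N^(1-1/p) ln(e+N)^alpha)], of which only the two
   lower bounds are used, and [expR X * M] for the scale [lambda] in the Luxemburg
   norm; [N / lambda] bounds [|f| / lambda].  The conclusion is the logarithm of
   [Phi(s) <= s^2 lambda^2 / (C N)] on [[dl, N / lambda]]. *)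
Definition scale_bound (dl A0 X : R) : Prop :=
  forall N M : R, 1 <= N -> 0 < M -> ln N / 2 <= ln M ->
    (1 - p^-1) * ln N + alpha * ln (ln (expR 1 + N)) <= ln M ->
    forall s, dl <= s -> s <= N / (expR X * M) ->
    orlicz_log_ratio s + 2 * ln (N / (expR X * M)) <= ln N - A0.

Lemma scale_bound_quasi_decreasing (dl A0 : R) : 0 < p -> 1 < c -> 0 < dl ->
  p < 2 \/ (p <= 2 /\ alpha <= 0) -> exists X, scale_bound dl A0 X.
Proof.
move=> p0 c1 dl0 hp; have [K HK] := orlicz_log_ratio_quasi_decreasing p0 c1 hp.
set D := K + orlicz_log_ratio dl.
exists (`|D| + `|A0|) => N M N1 M0 hM1 _ s ds _.
rewrite ln_div_expR_mul //; last exact: lt_le_trans ltr01 N1.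
have := HK dl s dl0 ds; have := ler_norm D; have := ler_norm A0.
have := normr_ge0 D; have := normr_ge0 A0; rewrite /D; lra.
Qed.

Lemma scale_bound_quasi_increasing_alpha_ge0 (dl A0 : R) : 1 < p -> 1 < c -> 0 < dl ->
  2 <= p -> 0 <= alpha -> exists X, scale_bound dl A0 X.
Proof.
move=> p1 c1 dl0 p2 a0.
have [K HK] := orlicz_log_ratio_quasi_increasing (lt_trans ltr01 p1) c1 (or_intror (conj p2 a0)).
set Z := K + alpha * p * ln (1 + ln c) + A0.
exists `|Z| => N M N1 M0 hM1 hM2 s ds sT.
have N0 : 0 < N by exact: lt_le_trans ltr01 N1.
set T := N / (expR `|Z| * M) in sT *.
have T0 : 0 < T by rewrite divr_gt0 // mulr_gt0 // expR_gt0.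
have lT : ln T = ln N - (`|Z| + ln M) by exact: ln_div_expR_mul.
have := normr_ge0 Z; have := ler_norm Z; have := ln_ge0 N1 => Z0 ZZ lnN0.
have TN : T <= N by rewrite -ler_ln ?posrE // lT; lra.
have lnlnT := lnln_le_lnln_expR1D c1 (ltW T0) TN.
have lnLN : 0 <= ln (ln (expR 1 + N)) by rewrite ln_ge0 // ln_expR1D_ge1 // ltW.
have lnM_ge : (p - 1) * ln N + alpha * p * ln (ln (expR 1 + N)) <= p * ln M.
  have -> : (p - 1) * ln N + alpha * p * ln (ln (expR 1 + N))
          = p * ((1 - p^-1) * ln N + alpha * ln (ln (expR 1 + N))).
    by field; rewrite gt_eqF //; lra.
  by rewrite ler_pM2l //; lra.
have := HK s T (lt_le_trans dl0 ds) sT; rewrite /orlicz_log_ratio lT /Z in ZZ *.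
have : alpha * p * lnln T <= alpha * p * (ln (1 + ln c) + ln (ln (expR 1 + N))).
  by apply: ler_wpM2l => //; nra.
nra.
Qed.

Lemma scale_bound_quasi_increasing_alpha_lt0 (dl A0 : R) : 1 < p -> 1 < c -> 0 < dl ->
  2 < p -> alpha < 0 -> exists X, scale_bound dl A0 X.
Proof.
move=> p1 c1 dl0 p2 a0.
have [K HK] := orlicz_log_ratio_quasi_increasing (lt_trans ltr01 p1) c1 (or_introl p2).
set m := p + ln (expR 1 + 1) / ln c.
set Z := K - alpha * p * ln m + A0.
exists `|Z| => N M N1 M0 hM1 hM2 s ds sT.
have N0 : 0 < N by exact: lt_le_trans ltr01 N1.
set T := N / (expR `|Z| * M) in sT *.
have lT : ln T = ln N - (`|Z| + ln M) by exact: ln_div_expR_mul.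
set L := ln (ln (expR 1 + N)) in hM2 *.
have L0 : 0 <= L by rewrite ln_ge0 // ln_expR1D_ge1 // ltW.
(* By [N^(1-1/p) ln(e+N)^alpha <= M], [T] stays below [Ts = N^(1/p) ln(e+N)^(-alpha)]. *)
set Ts := expR (ln N / p - alpha * L).
have lTs : ln Ts = ln N / p - alpha * L by rewrite expRK.
have Ts0 : 0 < Ts by exact: expR_gt0.
have pN : p * (ln N / p) = ln N by field; rewrite gt_eqF //; lra.
have TTs : T <= Ts.
  rewrite -ler_ln ?posrE ?divr_gt0 ?mulr_gt0 ?expR_gt0 // lT lTs.
  have := normr_ge0 Z; rewrite mulrBl mul1r mulrC in hM2; lra.
have lnlnTs : L - ln m <= lnln Ts.
  apply: lnln_expR1D_le_lnln => //; first exact: lt_trans ltr01 p1.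
  rewrite lTs mulrBr pN.
  have : alpha * L <= 0 by nra.
  nra.
have := HK s Ts (lt_le_trans dl0 ds) (le_trans sT TTs).
rewrite /orlicz_log_ratio lT lTs.
have := normr_ge0 Z; have := ler_norm Z; rewrite /Z => Z0 ZZ.
have : alpha * p * lnln Ts <= alpha * p * (L - ln m) by apply: ler_wnM2l => //; nra.
rewrite mulrBl mul1r mulrC in hM2.
nra.
Qed.

Lemma exists_scale_bound (dl A0 : R) : 1 < p -> 1 < c -> 0 < dl ->
  exists X, scale_bound dl A0 X.
Proof.
move=> p1 c1 dl0; have p0 : 0 < p by exact: lt_trans ltr01 p1.
have [p2|p2] := ltP p 2; first by apply: scale_bound_quasi_decreasing => //; left.
have [a0|a0] := leP 0 alpha; first exact: scale_bound_quasi_increasing_alpha_ge0.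
have [p2'|p2'] := ltP 2 p; first exact: scale_bound_quasi_increasing_alpha_lt0.
by apply: scale_bound_quasi_decreasing => //; right; split => //; exact: ltW.
Qed.

End ScaleBound.

Lemma luxemburg_norm_le (R : realType) (Phi g : R -> R) (lam : R) : 0 < lam ->
  (\int[lebesgue_measure]_(x in @torus R) (Phi (`|g x| / lam))%:E <= 1)%E ->
  (luxemburg_norm Phi g <= lam%:E)%E.
Proof. by move=> lam0 modular; apply: ereal_inf_lbound; exists lam. Qed.

Definition orlicz_trig_bound (R : realType) (p alpha N : R) : R :=
  Num.max (powR N (2^-1)) (powR N (1 - p^-1) * powR (ln (expR 1 + N)) alpha).

Lemma ln_orlicz_trig_bound (R : realType) (p alpha N : R) : 1 <= N ->
  let M := orlicz_trig_bound p alpha N in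
  [/\ 0 < M, ln N / 2 <= ln M
    & (1 - p^-1) * ln N + alpha * ln (ln (expR 1 + N)) <= ln M].
Proof.
move=> N1 M; have N0 : 0 < N by exact: lt_le_trans ltr01 N1.
have L0 : 0 < ln (expR 1 + N) by rewrite (lt_le_trans ltr01) ?ln_expR1D_ge1 ?ltW.
have M1_gt0 : 0 < powR N (2^-1) by exact: powR_gt0.
have M2_gt0 : 0 < powR N (1 - p^-1) * powR (ln (expR 1 + N)) alpha.
  by rewrite mulr_gt0 ?powR_gt0.
have M0 : 0 < M by rewrite lt_max M1_gt0.
split => //.
  by rewrite -[leLHS]mulrC -ln_powR ln_le // le_max lexx.
by rewrite -!ln_powR -lnM ?posrE ?powR_gt0 // ln_le // le_max lexx orbT.
Qed.

Section OrliczModular.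
Variables (R : realType) (p alpha c : R).
Hypothesis Y : young_function (orliczPhi p alpha c).
Local Notation Phi := (orliczPhi p alpha c).

(* Chosen so that [2 pi Phi(orlicz_threshold) <= 1/2]. *)
Definition orlicz_threshold : R := (4 * pi * (Phi 1 + 1))^-1.

Lemma orlicz_threshold_gt0 : 0 < orlicz_threshold.
Proof.
have := orliczPhi_ge0 Y 1; have := pi_gt0 R => pi0 Phi10.
by rewrite invr_gt0 !mulr_gt0 //; lra.
Qed.

Lemma orliczPhi_threshold_le : Phi orlicz_threshold * (pi *+ 2) <= 1 / 2.
Proof.
have := orliczPhi_ge0 Y 1; have := pi_ge2 R => pi2 Phi10.
have dl0 := orlicz_threshold_gt0.
have dl1 : orlicz_threshold <= 1.
  by rewrite invr_le1 ?unitfE ?gt_eqF ?mulr_gt0 //; nra.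
have := young_function_le_ratio Y (ltW dl0) dl1 ltr01; rewrite divr1 => Phi_dl.
have -> : 1 / 2 = (1 / 2) * (Phi 1 + 1) * (4 * pi) * orlicz_threshold.
  by rewrite /orlicz_threshold; field; rewrite ?gt_eqF //; nra.
rewrite mulr2n; nra.
Qed.

Lemma orliczPhi_le_threshold_add_sqr (Kf X N M y : R) :
  (forall s, 0 < s -> Phi s <= expR (Kf + p * ln s + alpha * p * ln (ln (c + s)))) ->
  scale_bound p alpha c orlicz_threshold (ln (4 * pi) + Kf) X ->
  1 <= N -> 0 < M -> ln N / 2 <= ln M ->
  (1 - p^-1) * ln N + alpha * ln (ln (expR 1 + N)) <= ln M ->
  0 <= y -> y <= N ->
  Phi (y / (expR X * M)) <= Phi orlicz_threshold + y ^+ 2 / (4 * pi * N).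
Proof.
move=> Phi_growth HX N1 M0 hM1 hM2 y0 yN.
have N0 : 0 < N by exact: lt_le_trans ltr01 N1.
have pi40 : 0 < 4 * pi :> R by rewrite mulr_gt0 ?pi_gt0.
set lam := expR X * M; have lam0 : 0 < lam by rewrite mulr_gt0 ?expR_gt0.
set u := y / lam.
have [ud|ud] := leP u orlicz_threshold.
  apply: (le_trans (orliczPhi_nondecreasing Y ud)).
  by rewrite lerDl divr_ge0 ?sqr_ge0 // ltW // mulr_gt0.
apply: (@le_trans _ _ (y ^+ 2 / (4 * pi * N))); last by rewrite lerDr orliczPhi_ge0.
have u0 : 0 < u := lt_trans orlicz_threshold_gt0 ud.
have y0' : 0 < y by rewrite -(divfK (lt0r_neq0 lam0) y) mulr_gt0.
have uT : u <= N / lam by rewrite ler_wpM2r // invr_ge0 ltW.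
have lnu : ln u = ln y - ln lam by rewrite ln_div ?posrE.
have := HX N M N1 M0 hM1 hM2 u (ltW ud) uT.
rewrite /orlicz_log_ratio -/lam ln_div ?posrE // lnu => h.
apply: (le_trans (Phi_growth u u0)).
have sq0 : 0 < y ^+ 2 / (4 * pi * N) by rewrite divr_gt0 ?exprn_gt0 ?mulr_gt0 ?pi_gt0.
rewrite -[in X in _ <= X](lnK (x := y ^+ 2 / (4 * pi * N))) ?posrE // ler_expR.
have y2 : 0 < y ^+ 2 by rewrite exprn_gt0.
have piN : 0 < 4 * pi * N by rewrite mulr_gt0.
rewrite ln_div ?posrE //.
rewrite lnXn // [ln (4 * pi * N)]lnM ?posrE // lnu mulr2n; lra.
Qed.

Lemma orlicz_modular_trig_poly_abs_le (A : seq int) (a b : int -> R) (N lam : R) :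
  uniq A -> (forall n, n \in A -> a n ^+ 2 + b n ^+ 2 <= 1) ->
  (size A)%:R <= N -> 0 < N -> 0 < lam ->
  (forall x, Phi (trig_poly_abs A a b x / lam)
             <= Phi orlicz_threshold + trig_poly_abs A a b x ^+ 2 / (4 * pi * N)) ->
  (\int[lebesgue_measure]_(x in @torus R) (Phi (`|trig_poly_abs A a b x| / lam))%:E <= 1)%E.
Proof.
move=> uA ab1 AN N0 lam0 Phi_le.
set g := trig_poly_abs A a b.
have pi0 := pi_gt0 R.
have Phi_dl := orliczPhi_threshold_le.
set bound := fun x => Phi orlicz_threshold + g x ^+ 2 / (4 * pi * N).
have cbound : continuous bound.
  move=> x; apply: cvgD; first exact: cvg_cst.
  by apply: cvgM; [apply: cvgM; exact: continuous_trig_poly_abs | exact: cvg_cst].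
have mbound := measurable_realfun.continuous_measurable_fun cbound.
have g0 x : 0 <= g x := sqrtr_ge0 _.
have -> : (\int[lebesgue_measure]_(x in @torus R) (Phi (`|g x| / lam))%:E =
          \int[lebesgue_measure]_(x in @torus R) (Phi (g x / lam))%:E)%E.
  by apply: eq_integral => x _; rewrite ger0_norm.
have mT : measurable (@torus R) by exact: measurable_itv.
apply: (@le_trans _ _ (\int[lebesgue_measure]_(x in @torus R) (bound x)%:E)%E).
  apply: ge0_le_integral => //.
  - by move=> x _; rewrite lee_fin orliczPhi_ge0.
  - apply/measurable_realfun.measurable_EFinP.
    apply: (measurableT_comp (measurable_realfun.nondecreasing_measurable _ (orliczPhi_nondecreasing Y))) => //.
    apply: measurable_funTS; apply: measurable_realfun.continuous_measurable_fun.
    by move=> x; apply: cvgM; [exact: continuous_trig_poly_abs | exact: cvg_cst].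
  - by apply/measurable_realfun.measurable_EFinP; exact: measurable_funTS.
  - by move=> x _; rewrite lee_fin Phi_le.
rewrite /torus integral_itv_bndo_bndc; last first.
  by apply/measurable_realfun.measurable_EFinP; exact: measurable_funTS.
under eq_integral do rewrite /bound trig_poly_abs_sqr EFinD mulrC EFinM.
rewrite integralD //; last 2 first.
- by apply: continuous_itv_integrable => x; exact: cvg_cst.
- by apply: integrableZl => //; apply: continuous_itv_integrable; exact: continuous_trig_sqr.
rewrite integralZl //; last by apply: continuous_itv_integrable; exact: continuous_trig_sqr.
rewrite parseval_trig // integral_itv_pi_cst -EFinM -EFinD lee_fin.
have sumN : \sum_(n <- A) (a n ^+ 2 + b n ^+ 2) <= N := le_trans (sum_ab_sqr_le_size ab1) AN.
have -> : (4 * pi * N)^-1 * (pi *+ 2 * \sum_(n <- A) (a n ^+ 2 + b n ^+ 2))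
        = (\sum_(n <- A) (a n ^+ 2 + b n ^+ 2)) / N / 2.
  by rewrite mulr2n; field; rewrite ?gt_eqF //; lra.
have : (\sum_(n <- A) (a n ^+ 2 + b n ^+ 2)) / N <= 1 by rewrite ler_pdivrMr // mul1r.
rewrite -mulrnAr; lra.
Qed.
End OrliczModular.

Unset Implicit Arguments.
Theorem lemma5p2 (R : realType) (p alpha c : R) :
  1 < p -> 1 < c -> young_function (orliczPhi p alpha c) ->
  exists C : R, 0 < C /\
    forall (N : nat) (A : seq int) (a b : int -> R),
      (1 <= N)%N -> uniq A -> (size A <= N)%N ->
      (forall n, n \in A -> a n ^+ 2 + b n ^+ 2 <= 1) ->
      (luxemburg_norm (orliczPhi p alpha c) (trig_poly_abs A a b)
        <= (C * Num.max (powR (N%:R) (2^-1))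
                  (powR (N%:R) (1 - p^-1) * powR (ln (expR 1 + N%:R)) alpha))%:E)%E.
Proof.
move=> p1 c1 Y.
have [Kf Phi_growth] := orliczPhi_growth alpha p1 c1.
have [X HX] := exists_scale_bound alpha (ln (4 * pi) + Kf) p1 c1 (orlicz_threshold_gt0 Y).
exists (expR X); split; first exact: expR_gt0.
move=> N A a b N1 uA AN ab1.
have N1r : 1 <= N%:R :> R by rewrite ler1n.
have [M0 hM1 hM2] := ln_orlicz_trig_bound p alpha N1r.
apply: luxemburg_norm_le; first by rewrite mulr_gt0 ?expR_gt0.
apply: (orlicz_modular_trig_poly_abs_le Y (N := N%:R)) => //.
- by rewrite ler_nat.
- exact: lt_le_trans ltr01 N1r.
- by rewrite mulr_gt0 ?expR_gt0.
move=> x; apply: (orliczPhi_le_threshold_add_sqr Y Phi_growth HX) => //.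
  exact: sqrtr_ge0.
by rewrite (le_trans (trig_poly_abs_le_size ab1 x)) ?ler_nat.
Qed.
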